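(* Let $\Lambda$ be a normal modal logic of Type A or of Type B, and let $M\subseteq\{\Diamond,\Box\}$. Then it is decidable, given two finite $M$-simple sets $\Phi,\Psi$ of modal formulas, whether $\mathrm{ML}_\Phi\preceq^\Lambda\mathrm{ML}_\Psi$.
   Context: Modal formulas: $\phi::=x\mid\neg\phi\mid\phi\land\psi\mid\phi\lor\psi\mid\Diamond\phi\mid\Box\phi$. A normal modal logic is a set of modal formulas containing all propositional tautologies, the K axiom and $\Diamond\phi\leftrightarrow\neg\Box\neg\phi$, closed under modus ponens, uniform substitution and necessitation; $\Lambda\vdash\phi$ means $\phi\in\Lambda$. $F_\circ$ ($F_\bullet$) is the one-world frame with a reflexive (irreflexive) world. $\Lambda$ is of Type A if $F_\circ\models\Lambda$; of Type B if $F_\bullet\models\Lambda$ and $\Lambda\vdash\Box^n\bot$ for some $n\ge1$. For a set $\Phi$ of modal formulas, $\mathrm{ML}_\Phi$ is the smallest set containing all variables and $\oplus_\phi(\psi_1,\dots,\psi_n)$ whenever $\phi(x_1,\dots,x_n)\in\Phi$ and $\psi_i\in\mathrm{ML}_\Phi$, such a formula standing for the modal formula obtained by recursively substituting $\psi_i$ for $x_i$ in $\phi$. $\mathrm{ML}_\Phi\preceq^\Lambda\mathrm{ML}_\Psi$ means every $\mathrm{ML}_\Phi$-formula is $\Lambda$-equivalent to some $\mathrm{ML}_\Psi$-formula. A set $\Phi$ is $M$-simple if it consists of $\Diamond x$ if and only if $\Diamond\in M$, $\Box x$ if and only if $\Box\in M$, plus any number of purely propositional formulas. *)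

From Stdlib Require Import List Arith.
Import ListNotations.

Inductive form : Type :=
| Var : nat -> form
| Neg : form -> form
| And : form -> form -> form
| Or  : form -> form -> form
| Dia : form -> form
| Box : form -> form.

Definition Imp (a b : form) : form := Or (Neg a) b.
Definition Iff (a b : form) : form := And (Imp a b) (Imp b a).
(* falsum, as the grammar has no constant *)
Definition Bot : form := And (Var 0) (Neg (Var 0)).

Fixpoint boxn (n : nat) (a : form) : form :=
  match n with 0 => a | S k => Box (boxn k a) end.

Fixpoint subst (s : nat -> form) (a : form) : form :=
  match a with
  | Var n => s n
  | Neg a => Neg (subst s a)
  | And a b => And (subst s a) (subst s b)
  | Or a b => Or (subst s a) (subst s b)
  | Dia a => Dia (subst s a)
  | Box a => Box (subst s a)
  end.

(** propositional evaluation: modal subformulas are treated as atoms *)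
Fixpoint peval (v : nat -> bool) (d b : form -> bool) (a : form) : bool :=
  match a with
  | Var n => v n
  | Neg a => negb (peval v d b a)
  | And a1 a2 => peval v d b a1 && peval v d b a2
  | Or a1 a2 => peval v d b a1 || peval v d b a2
  | Dia a => d a
  | Box a => b a
  end.

(** instances of propositional tautologies *)
Definition tautology (a : form) : Prop :=
  forall v d b, peval v d b a = true.

Definition logic := form -> Prop.

Record normal_logic (L : logic) : Prop := {
  nl_taut : forall a, tautology a -> L a;
  nl_K : L (Imp (Box (Imp (Var 0) (Var 1))) (Imp (Box (Var 0)) (Box (Var 1))));
  nl_dual : L (Iff (Dia (Var 0)) (Neg (Box (Neg (Var 0)))));
  nl_mp : forall a b, L a -> L (Imp a b) -> L b;
  nl_us : forall s a, L a -> L (subst s a);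
  nl_nec : forall a, L a -> L (Box a)
}.

(** one-world frames: reflexive (F_o) and irreflexive (F_bullet) *)
Fixpoint eval_refl (v : nat -> bool) (a : form) : bool :=
  match a with
  | Var n => v n
  | Neg a => negb (eval_refl v a)
  | And a1 a2 => eval_refl v a1 && eval_refl v a2
  | Or a1 a2 => eval_refl v a1 || eval_refl v a2
  | Dia a => eval_refl v a
  | Box a => eval_refl v a
  end.

Fixpoint eval_irr (v : nat -> bool) (a : form) : bool :=
  match a with
  | Var n => v n
  | Neg a => negb (eval_irr v a)
  | And a1 a2 => eval_irr v a1 && eval_irr v a2
  | Or a1 a2 => eval_irr v a1 || eval_irr v a2
  | Dia _ => false
  | Box _ => true
  end.

Definition refl_frame_validates (L : logic) : Prop :=
  forall a, L a -> forall v, eval_refl v a = true.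
Definition irr_frame_validates (L : logic) : Prop :=
  forall a, L a -> forall v, eval_irr v a = true.

Definition typeA (L : logic) : Prop := refl_frame_validates L.
Definition typeB (L : logic) : Prop :=
  irr_frame_validates L /\ exists n, 1 <= n /\ L (boxn n Bot).

Inductive ML (Phi : list form) : form -> Prop :=
| ML_var : forall n, ML Phi (Var n)
| ML_app : forall phi s, In phi Phi -> (forall x, ML Phi (s x)) ->
    ML Phi (subst s phi).

Definition preceq (L : logic) (Phi Psi : list form) : Prop :=
  forall a, ML Phi a -> exists b, ML Psi b /\ L (Iff a b).

(** M-simple sets; M is given by two booleans (Dia in M, Box in M) *)
Fixpoint propositional (a : form) : bool :=
  match a with
  | Var _ => true
  | Neg a => propositional a
  | And a b | Or a b => propositional a && propositional b
  | Dia _ | Box _ => false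
  end.

Definition M_simple (mD mB : bool) (Phi : list form) : Prop :=
  (forall a, In a Phi ->
      propositional a = true
      \/ (mD = true /\ exists x, a = Dia (Var x))
      \/ (mB = true /\ exists x, a = Box (Var x)))
  /\ (mD = true -> exists x, In (Dia (Var x)) Phi)
  /\ (mB = true -> exists x, In (Box (Var x)) Phi).

Inductive code : Type :=
| cZero : code
| cSucc : code
| cProj : nat -> code
| cComp : code -> list code -> code
| cPrec : code -> code -> code
| cMu : code -> code.

Inductive eval : code -> list nat -> nat -> Prop :=
| ev_zero : forall xs, eval cZero xs 0
| ev_succ : forall x xs, eval cSucc (x :: xs) (S x)
| ev_proj : forall i xs, i < length xs -> eval (cProj i) xs (nth i xs 0)
| ev_comp : forall f gs xs ys z,
    Forall2 (fun g y => eval g xs y) gs ys -> eval f ys z ->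
    eval (cComp f gs) xs z
| ev_prec0 : forall f g xs z, eval f xs z -> eval (cPrec f g) (0 :: xs) z
| ev_precS : forall f g n xs y z,
    eval (cPrec f g) (n :: xs) y -> eval g (n :: y :: xs) z ->
    eval (cPrec f g) (S n :: xs) z
| ev_mu : forall f xs n,
    eval f (n :: xs) 0 ->
    (forall m, m < n -> exists k, eval f (m :: xs) (S k)) ->
    eval (cMu f) xs n.

Definition npair (a b : nat) : nat := (a + b) * (a + b + 1) / 2 + b.

Fixpoint enc_form (a : form) : nat :=
  match a with
  | Var n => npair 0 n
  | Neg a => npair 1 (enc_form a)
  | And a b => npair 2 (npair (enc_form a) (enc_form b))
  | Or a b => npair 3 (npair (enc_form a) (enc_form b))
  | Dia a => npair 4 (enc_form a)
  | Box a => npair 5 (enc_form a)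
  end.

Fixpoint enc_list (l : list form) : nat :=
  match l with
  | [] => 0
  | a :: l => S (npair (enc_form a) (enc_list l))
  end.

Definition decidable_on (dom : list form -> Prop)
    (P : list form -> list form -> Prop) : Prop :=
  exists c : code, forall Phi Psi, dom Phi -> dom Psi ->
    (P Phi Psi /\ eval c [npair (enc_list Phi) (enc_list Psi)] 1)
    \/ (~ P Phi Psi /\ eval c [npair (enc_list Phi) (enc_list Psi)] 0).

From Stdlib Require Import List Arith Lia Bool Morphisms Setoid ClassicalEpsilon.
Import ListNotations.

(* On the one-world frame validating the logic, the modal generators [Dia x] and [Box x]
   of an M-simple set act as [x] (Type A) or as the constants [Bot] and [Top] (Type B),
   and in Type B the logic itself proves [Dia^n x <-> Bot] and [Box^n x <-> Top] for the
   [n] with [Box^n Bot].  Hence [ML_Phi] is below [ML_Psi] exactly when every propositional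
   member of [Phi] lies in the clone of Boolean functions generated by the propositional
   members of [Psi], together with [Bot] (if [Dia] is in [M]) and [Top] (if [Box] is in
   [M]) in Type B.  Membership of a [k]-ary function in a finitely generated clone is
   decidable: saturate the finite set of [k]-ary truth tables, starting from the
   projections, under composition with the generators; this stabilises within [2 ^ 2 ^ k]
   rounds.  The whole procedure is primitive recursive, so it is written in a small
   language of bounded sums and iterations over codes, which compiles to mu-recursive
   codes. *)

(** * Finite sums, digits and pairing *)

Fixpoint bsum (n : nat) (f : nat -> nat) : nat :=
  match n with 0 => 0 | S m => bsum m f + f m end.

Lemma bsum_ext n f g : (forall i, i < n -> f i = g i) -> bsum n f = bsum n g.
Proof. induction n as [|n IH]; intros H; simpl; [reflexivity|]. rewrite IH, H; auto. Qed.

Lemma bsum_zero n f : (forall i, i < n -> f i = 0) -> bsum n f = 0.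
Proof. intros H. induction n as [|n IH]; simpl; [reflexivity|]. rewrite IH, H; auto. Qed.

Lemma bsum_single n f q : q < n -> (forall i, i < n -> i <> q -> f i = 0) -> bsum n f = f q.
Proof.
  induction n as [|n IH]; intros Hq H; [lia|]. simpl.
  destruct (Nat.eq_dec q n) as [->|Hne].
  - rewrite bsum_zero; auto. intros i Hi. apply H; lia.
  - rewrite IH, (H n); lia || (intros; apply H; lia).
Qed.

Lemma bsum_ge n f i : i < n -> f i <= bsum n f.
Proof.
  induction n as [|n IH]; intros H; simpl; [lia|].
  destruct (Nat.eq_dec i n) as [->|]; [lia|]. specialize (IH ltac:(lia)). lia.
Qed.

Lemma bsum_pos n f : 0 < bsum n f <-> exists i, i < n /\ 0 < f i.
Proof.
  split.
  - induction n as [|n IH]; simpl; intros H; [lia|].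
    destruct (Nat.eq_dec (f n) 0) as [E|E].
    + destruct IH as [i [Hi Hf]]; [lia|]. exists i. split; [lia|exact Hf].
    + exists n. split; lia.
  - intros [i [Hi Hf]]. pose proof (bsum_ge n f i Hi). lia.
Qed.

Lemma bsum_le n f g : (forall i, i < n -> f i <= g i) -> bsum n f <= bsum n g.
Proof.
  induction n as [|n IH]; intros H; simpl; [lia|].
  specialize (IH (fun i Hi => H i ltac:(lia))). specialize (H n ltac:(lia)). lia.
Qed.

Lemma bsum_le_eq n f g :
  (forall i, i < n -> f i <= g i) -> bsum n f = bsum n g -> forall i, i < n -> f i = g i.
Proof.
  induction n as [|n IH]; intros H E i Hi; [lia|]. cbn [bsum] in E.
  pose proof (bsum_le n f g (fun i Hi => H i ltac:(lia))). pose proof (H n ltac:(lia)).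
  destruct (Nat.eq_dec i n) as [->|]; [lia|].
  apply IH; [intros; apply H|..]; lia.
Qed.

Lemma bsum_bits_full m (p : nat -> bool) :
  bsum m (fun i => Nat.b2n (p i)) = m <-> forall i, i < m -> p i = true.
Proof.
  induction m as [|m IH]; simpl; [split; [lia|reflexivity]|].
  assert (Hle : bsum m (fun i => Nat.b2n (p i)) <= m).
  { clear IH. induction m as [|m IHm]; simpl; [lia|]. destruct (p m); simpl; lia. }
  split.
  - intros E i Hi. destruct (p m) eqn:Em; simpl in E; [|lia].
    destruct (Nat.eq_dec i m) as [->|]; [exact Em|]. apply IH; lia.
  - intros Hall. rewrite (proj2 IH), Hall by auto. simpl. lia.
Qed.

Lemma bsum_search n (P : nat -> nat -> bool) a b :
  a < n -> b < n -> P a b = true -> (forall i j, P i j = true -> i = a /\ j = b) ->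
  bsum n (fun i => i * Nat.b2n (0 <? bsum n (fun j => Nat.b2n (P i j)))) = a.
Proof.
  intros Ha Hb Hab Huniq. rewrite (bsum_single _ _ a Ha).
  - enough (Hpos : 0 < bsum n (fun j => Nat.b2n (P a j))).
    { apply Nat.ltb_lt in Hpos. rewrite Hpos. apply Nat.mul_1_r. }
    apply bsum_pos. exists b. rewrite Hab. split; [exact Hb | apply Nat.lt_0_1].
  - intros i _ Hne. rewrite bsum_zero; [apply Nat.mul_0_r|]. intros j _.
    destruct (P i j) eqn:E; [|reflexivity]. apply Huniq in E. lia.
Qed.

Lemma b2n_ltb_pos x : 0 < Nat.b2n (0 <? x) <-> 0 < x.
Proof. destruct (Nat.ltb_spec 0 x); simpl; split; lia. Qed.

Lemma b2n_eq_1 b : Nat.b2n b = 1 <-> b = true.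
Proof. destruct b; simpl; split; congruence. Qed.

Lemma list_sum_map_pos {A} (f : A -> nat) l :
  0 < list_sum (map f l) <-> exists x, In x l /\ 0 < f x.
Proof.
  induction l as [|a l IH]; simpl; [split; [lia|firstorder]|].
  split.
  - intros H. destruct (Nat.eq_dec (f a) 0) as [E|E].
    + destruct (proj1 IH) as [x [Hx Hf]]; [lia|]. eauto.
    + exists a. split; [left; reflexivity | lia].
  - intros [x [[->|Hx] Hf]]; [lia|]. enough (0 < list_sum (map f l)) by lia. apply IH. eauto.
Qed.

Definition digit (B W j : nat) : nat := W / B ^ j mod B.

Lemma digit_lt N a i : 0 < N -> digit N a i < N.
Proof. intros HN. apply Nat.mod_upper_bound. lia. Qed.

Lemma bsum_digits_lt B n d :
  (forall i, i < n -> d i < B) -> bsum n (fun i => B ^ i * d i) < B ^ n.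
Proof.
  induction n as [|n IH]; intros Hd; simpl; [lia|].
  specialize (IH (fun i Hi => Hd i ltac:(lia))). specialize (Hd n ltac:(lia)). nia.
Qed.

Lemma digit_bsum B n d j :
  (forall i, i < n -> d i < B) -> j < n -> digit B (bsum n (fun i => B ^ i * d i)) j = d j.
Proof.
  induction n as [|n IH]; intros Hd Hj; [lia|].
  assert (HB : B <> 0) by (specialize (Hd j Hj); lia).
  assert (HBj : B ^ j <> 0) by (apply Nat.pow_nonzero, HB).
  pose proof (bsum_digits_lt B n d (fun i Hi => Hd i ltac:(lia))) as Hlt.
  unfold digit. cbn [bsum]. set (W := bsum n (fun i => B ^ i * d i)) in *.
  destruct (Nat.eq_dec j n) as [->|Hne].
  - rewrite Nat.mul_comm, Nat.div_add, Nat.div_small by assumption.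
    apply Nat.mod_small, Hd. lia.
  - replace (B ^ n * d n) with ((B * B ^ (n - S j) * d n) * B ^ j)
      by (rewrite <- Nat.pow_succ_r', <- Nat.mul_assoc, (Nat.mul_comm (d n)), Nat.mul_assoc,
            <- Nat.pow_add_r; f_equal; f_equal; lia).
    rewrite Nat.div_add by exact HBj.
    rewrite <- !Nat.mul_assoc, (Nat.mul_comm B), Nat.Div0.mod_add.
    apply IH; [intros; apply Hd|]; lia.
Qed.

Lemma digit2_testbit W j : digit 2 W j = Nat.b2n (Nat.testbit W j).
Proof. symmetry. apply Nat.testbit_spec'. Qed.

Lemma testbit_bsum n (p : nat -> bool) j :
  j < n -> Nat.testbit (bsum n (fun i => 2 ^ i * Nat.b2n (p i))) j = p j.
Proof.
  intros Hj. apply Nat.b2n_inj. rewrite <- digit2_testbit.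
  apply (digit_bsum 2 n (fun i => Nat.b2n (p i))); [|exact Hj].
  intros i _. destruct (p i); simpl; lia.
Qed.

Lemma bsum_bits_lt n (p : nat -> bool) : bsum n (fun i => 2 ^ i * Nat.b2n (p i)) < 2 ^ n.
Proof. apply bsum_digits_lt. intros i _. destruct (p i); simpl; lia. Qed.

Definition triangle s := s * (s + 1) / 2.

Lemma triangle_succ s : triangle (S s) = triangle s + S s.
Proof.
  unfold triangle. replace (S s * (S s + 1)) with (s * (s + 1) + S s * 2) by nia.
  rewrite Nat.div_add by lia. reflexivity.
Qed.

Lemma triangle_ge s : s <= triangle s.
Proof. induction s as [|s IH]; [apply Nat.le_0_l|]. rewrite triangle_succ. lia. Qed.

Lemma triangle_mono s s' : s <= s' -> triangle s <= triangle s'.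
Proof. induction 1; [reflexivity|]. rewrite triangle_succ. lia. Qed.

Lemma npair_triangle a b : npair a b = triangle (a + b) + b.
Proof. reflexivity. Qed.

Lemma npair_inj a b a' b' : npair a b = npair a' b' -> a = a' /\ b = b'.
Proof.
  rewrite !npair_triangle. intros H.
  assert (Hs : a + b = a' + b').
  { destruct (Nat.lt_total (a + b) (a' + b')) as [Hl|[Hl|Hl]]; [|exact Hl|].
    - pose proof (triangle_mono (S (a + b)) (a' + b') Hl). rewrite triangle_succ in *. lia.
    - pose proof (triangle_mono (S (a' + b')) (a + b) Hl). rewrite triangle_succ in *. lia. }
  rewrite Hs in H. lia.
Qed.

Lemma npair_ge_l a b : a <= npair a b.
Proof. rewrite npair_triangle. pose proof (triangle_ge (a + b)). lia. Qed.

Lemma npair_ge_r a b : b <= npair a b.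
Proof. rewrite npair_triangle. lia. Qed.

Lemma npair_gt_r a b : 1 <= a -> b < npair a b.
Proof. intros. rewrite npair_triangle. pose proof (triangle_ge (a + b)). lia. Qed.

Lemma lt_npair_pair_l t x y : 1 <= t -> x < npair t (npair x y).
Proof. intros Ht. pose proof (npair_ge_l x y). pose proof (npair_gt_r t (npair x y) Ht). lia. Qed.

Lemma lt_npair_pair_r t x y : 1 <= t -> y < npair t (npair x y).
Proof. intros Ht. pose proof (npair_ge_r x y). pose proof (npair_gt_r t (npair x y) Ht). lia. Qed.

(* Unpairing searches the box [0, z]^2 for the preimage of [z]. *)
Definition nfst z :=
  bsum (z + 1) (fun a => a * Nat.b2n (0 <? bsum (z + 1) (fun b => Nat.b2n (npair a b =? z)))).
Definition nsnd z :=
  bsum (z + 1) (fun b => b * Nat.b2n (0 <? bsum (z + 1) (fun a => Nat.b2n (npair a b =? z)))).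

Lemma nfst_npair a b : nfst (npair a b) = a.
Proof.
  pose proof (npair_ge_l a b). pose proof (npair_ge_r a b).
  apply (bsum_search _ (fun i j => npair i j =? npair a b) a b); [lia | lia | apply Nat.eqb_refl|].
  intros i j E. apply Nat.eqb_eq, npair_inj in E. exact E.
Qed.

Lemma nsnd_npair a b : nsnd (npair a b) = b.
Proof.
  pose proof (npair_ge_l a b). pose proof (npair_ge_r a b).
  apply (bsum_search _ (fun i j => npair j i =? npair a b) b a); [lia | lia | apply Nat.eqb_refl|].
  intros i j E. apply Nat.eqb_eq, npair_inj in E. tauto.
Qed.

(** * Mu-recursive functions *)

Definition computable (k : nat) (f : list nat -> nat) : Prop :=
  exists c, forall xs, length xs = k -> eval c xs (f xs).

Lemma computable_ext k f g :
  computable k f -> (forall xs, length xs = k -> f xs = g xs) -> computable k g.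
Proof. intros [c Hc] Hfg. exists c. intros xs Hl. rewrite <- Hfg by exact Hl. auto. Qed.

Lemma computable_proj k i : i < k -> computable k (fun xs => nth i xs 0).
Proof. intros Hi. exists (cProj i). intros xs Hl. apply ev_proj. lia. Qed.

Lemma computable_const k n : computable k (fun _ => n).
Proof.
  induction n as [|n [c Hc]].
  - exists cZero. intros. apply ev_zero.
  - exists (cComp cSucc [c]). intros xs Hl.
    eapply ev_comp; [constructor; [apply Hc; auto | constructor] | apply ev_succ].
Qed.

Lemma computable_comp k f gs :
  computable (length gs) f -> Forall (computable k) gs ->
  computable k (fun xs => f (map (fun g => g xs) gs)).
Proof.
  intros [cf Hf] Hgs.
  assert (Hcs : exists cs, Forall2 (fun g c => forall xs, length xs = k -> eval c xs (g xs)) gs cs).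
  { clear Hf. induction Hgs as [|g gs [c Hc] _ IH].
    - exists []. constructor.
    - destruct IH as [cs Hcs]. exists (c :: cs). constructor; auto. }
  destruct Hcs as [cs Hcs].
  exists (cComp cf cs). intros xs Hl. apply ev_comp with (ys := map (fun g => g xs) gs).
  - clear Hf Hgs. induction Hcs; constructor; auto.
  - apply Hf. apply length_map.
Qed.

Lemma computable_succ k f : computable k f -> computable k (fun xs => S (f xs)).
Proof.
  intros Hf. apply (computable_comp k (fun ys => S (nth 0 ys 0)) [f]); [|repeat constructor; auto].
  exists cSucc. intros [|y []] Hl; try discriminate. apply ev_succ.
Qed.

Lemma computable_prec k g h :
  computable k g -> computable (S (S k)) h ->
  computable (S k) (fun xs =>
    nat_rec (fun _ => nat) (g (tl xs)) (fun m r => h (m :: r :: tl xs)) (hd 0 xs)).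
Proof.
  intros [cg Hg] [ch Hh]. exists (cPrec cg ch). intros [|n ys] Hl; [discriminate|].
  injection Hl as Hl. simpl. induction n as [|n IH].
  - apply ev_prec0. apply Hg. exact Hl.
  - eapply ev_precS; [apply IH | apply Hh; simpl; lia].
Qed.

Lemma map_nth_seq_app (pre l : list nat) :
  map (fun i => nth i (pre ++ l) 0) (seq (length pre) (length l)) = l.
Proof.
  revert pre. induction l as [|a l IH]; intros pre; [reflexivity|]. simpl.
  rewrite app_nth2, Nat.sub_diag by lia. f_equal.
  specialize (IH (pre ++ [a])). rewrite <- app_assoc, length_app, Nat.add_1_r in IH. exact IH.
Qed.

Lemma computable_select k f idx :
  computable (length idx) f -> Forall (fun i => i < k) idx ->
  computable k (fun xs => f (map (fun i => nth i xs 0) idx)).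
Proof.
  intros Hf Hidx. eapply computable_ext.
  - apply (computable_comp k f (map (fun i xs => nth i xs 0) idx)).
    + rewrite length_map. exact Hf.
    + apply Forall_map. eapply Forall_impl; [|exact Hidx]. apply computable_proj.
  - intros xs _. cbv beta. rewrite map_map. reflexivity.
Qed.

Lemma Forall_lt_seq k c n : c + n <= k -> Forall (fun i => i < k) (seq c n).
Proof. intros H. apply Forall_forall. intros i Hi. apply in_seq in Hi. lia. Qed.

Lemma computable_let k A B :
  computable k A -> computable (S k) B -> computable k (fun xs => B (A xs :: xs)).
Proof.
  intros HA HB. eapply computable_ext.
  - apply (computable_comp k B (A :: map (fun i xs => nth i xs 0) (seq 0 k))).
    + simpl. rewrite length_map, length_seq. exact HB.
    + constructor; [exact HA|]. apply Forall_map, Forall_forall. intros i Hi.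
      apply in_seq in Hi. apply computable_proj. lia.
  - intros xs Hl. simpl. rewrite map_map, <- Hl. f_equal. f_equal.
    exact (map_nth_seq_app [] xs).
Qed.

Lemma computable_iter k I B :
  computable k I -> computable (S k) B ->
  computable (S k) (fun xs => Nat.iter (hd 0 xs) (fun s => B (s :: tl xs)) (I (tl xs))).
Proof.
  intros HI HB. eapply computable_ext.
  - apply (computable_prec k I (fun ys => B (map (fun i => nth i ys 0) (1 :: seq 2 k))));
      [exact HI|].
    apply computable_select; [simpl; rewrite length_seq; exact HB|].
    constructor; [lia | apply Forall_lt_seq; lia].
  - intros [|n l] Hl; [discriminate|]. injection Hl as Hl. simpl.
    induction n as [|n IH]; [reflexivity|]. simpl. rewrite IH. f_equal. f_equal.
    rewrite <- Hl. exact (map_nth_seq_app [n; _] l).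
Qed.

Lemma computable_binop k (op : nat -> nat -> nat) f g :
  computable 2 (fun xs => op (nth 0 xs 0) (nth 1 xs 0)) -> computable k f -> computable k g ->
  computable k (fun xs => op (f xs) (g xs)).
Proof.
  intros Hop Hf Hg. apply (computable_comp k (fun ys => op (nth 0 ys 0) (nth 1 ys 0)) [f; g]);
    [exact Hop | repeat constructor; auto].
Qed.

Lemma computable_add : computable 2 (fun xs => nth 0 xs 0 + nth 1 xs 0).
Proof.
  eapply computable_ext.
  - apply (computable_iter 1 (fun l => nth 0 l 0) (fun l => S (nth 0 l 0)));
      [|apply computable_succ]; apply computable_proj; lia.
  - intros [|x [|y []]] Hl; try discriminate. simpl.
    induction x as [|x IH]; simpl; [reflexivity | rewrite IH; reflexivity].
Qed.

Lemma computable_mul : computable 2 (fun xs => nth 0 xs 0 * nth 1 xs 0).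
Proof.
  eapply computable_ext.
  - apply (computable_iter 1 (fun _ => 0) (fun l => nth 1 l 0 + nth 0 l 0));
      [apply computable_const|].
    apply (computable_binop 2 Nat.add); [apply computable_add | apply computable_proj; lia ..].
  - intros [|x [|y []]] Hl; try discriminate. simpl.
    induction x as [|x IH]; simpl; [reflexivity | rewrite IH; reflexivity].
Qed.

Lemma computable_pred : computable 1 (fun xs => pred (nth 0 xs 0)).
Proof.
  eapply computable_ext.
  - apply (computable_prec 0 (fun _ => 0) (fun ys => nth 0 ys 0));
      [apply computable_const | apply computable_proj; lia].
  - intros [|[|x] []] Hl; try discriminate; reflexivity.
Qed.

Lemma computable_sub : computable 2 (fun xs => nth 0 xs 0 - nth 1 xs 0).
Proof.
  assert (Hiter : computable 2 (fun xs => Nat.iter (hd 0 xs) pred (nth 0 (tl xs) 0))).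
  { apply (computable_iter 1 (fun l => nth 0 l 0) (fun l => pred (nth 0 l 0)));
      [apply computable_proj; lia|].
    apply (computable_comp 2 (fun ys => pred (nth 0 ys 0)) [fun l => nth 0 l 0]);
      [exact computable_pred|].
    repeat constructor. apply computable_proj; lia. }
  eapply computable_ext.
  - apply (computable_select 2 (fun xs => Nat.iter (hd 0 xs) pred (nth 0 (tl xs) 0)) [1; 0]);
      [exact Hiter | repeat constructor].
  - intros [|x [|y []]] Hl; try discriminate. clear Hl. simpl.
    induction y as [|y IH]; [simpl; lia|]. simpl. rewrite IH. lia.
Qed.

Lemma computable_bsum k B :
  computable (S k) B -> computable (S k) (fun xs => bsum (hd 0 xs) (fun i => B (i :: tl xs))).
Proof.
  intros HB. eapply computable_ext.
  - apply (computable_prec k (fun _ => 0)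
      (fun ys => nth 1 ys 0 + B (map (fun i => nth i ys 0) (0 :: seq 2 k))));
      [apply computable_const|].
    apply (computable_binop _ Nat.add); [exact computable_add | apply computable_proj; lia |].
    apply computable_select; [simpl; rewrite length_seq; exact HB|].
    constructor; [lia | apply Forall_lt_seq; lia].
  - intros [|n l] Hl; [discriminate|]. injection Hl as Hl. simpl.
    induction n as [|n IH]; [reflexivity|]. simpl. rewrite IH. f_equal. f_equal. f_equal.
    rewrite <- Hl. exact (map_nth_seq_app [n; _] l).
Qed.

(** * An expression language for primitive recursion *)

Inductive exp : Type :=
| EV (i : nat) | EC (n : nat)
| EAdd (a b : exp) | ESub (a b : exp) | EMul (a b : exp)
| ESum (n body : exp) | EIter (n init step : exp) | ELet (a body : exp).

Definition push (x : nat) (env : nat -> nat) : nat -> nat :=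
  fun i => match i with 0 => x | S j => env j end.

Fixpoint den (e : exp) (env : nat -> nat) : nat :=
  match e with
  | EV i => env i
  | EC n => n
  | EAdd a b => den a env + den b env
  | ESub a b => den a env - den b env
  | EMul a b => den a env * den b env
  | ESum n body => bsum (den n env) (fun i => den body (push i env))
  | EIter n init step => Nat.iter (den n env) (fun s => den step (push s env)) (den init env)
  | ELet a body => den body (push (den a env) env)
  end.

Theorem exp_computable e k : computable k (fun l => den e (fun i => nth i l 0)).
Proof.
  revert k. induction e as [i|n|a IHa b IHb|a IHa b IHb|a IHa b IHb|n IHn body IHbody
                          |n IHn init IHinit step IHstep|a IHa body IHbody]; intros k; cbn [den].
  - destruct (Nat.lt_ge_cases i k) as [Hi|Hi]; [apply computable_proj; exact Hi|].
    eapply computable_ext; [apply (computable_const k 0)|].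
    intros l Hl. rewrite nth_overflow; lia.
  - apply computable_const.
  - apply computable_binop; auto. apply computable_add.
  - apply computable_binop; auto. apply computable_sub.
  - apply computable_binop; auto. apply computable_mul.
  - exact (computable_let k _ _ (IHn k) (computable_bsum k _ (IHbody (S k)))).
  - exact (computable_let k _ _ (IHn k) (computable_iter k _ _ (IHinit k) (IHstep (S k)))).
  - exact (computable_let k _ _ (IHa k) (IHbody (S k))).
Qed.

Lemma iter_ext n (f g : nat -> nat) x : (forall s, f s = g s) -> Nat.iter n f x = Nat.iter n g x.
Proof. intros H. induction n as [|n IH]; simpl; [reflexivity|]. rewrite IH, H. reflexivity. Qed.

#[export] Instance bsum_proper : Proper (eq ==> pointwise_relation nat eq ==> eq) bsum.
Proof. intros n m -> f g H. apply bsum_ext. intros i _. apply H. Qed.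

#[export] Instance iter_proper n :
  Proper (pointwise_relation nat eq ==> eq ==> eq) (@Nat.iter n nat).
Proof. intros f g H x y ->. apply iter_ext. exact H. Qed.

Lemma den_ext e env1 env2 : (forall i, env1 i = env2 i) -> den e env1 = den e env2.
Proof.
  assert (Hpush : forall x env env', (forall i, env i = env' i) ->
            forall i, push x env i = push x env' i) by (intros x env env' H [|i]; simpl; auto).
  revert env1 env2. induction e; intros env1 env2 H; simpl; rewrite ?(IHe1 env1 env2 H).
  all: try (rewrite ?(IHe2 env1 env2 H); reflexivity); try apply H.
  - apply bsum_ext. intros j _. apply IHe2, Hpush, H.
  - rewrite (IHe2 env1 env2 H). apply iter_ext. intros j. apply IHe3, Hpush, H.
  - apply IHe2, Hpush, H.
Qed.

Fixpoint shift (c : nat) (e : exp) : exp :=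
  match e with
  | EV i => if i <? c then EV i else EV (S i)
  | EC n => EC n
  | EAdd a b => EAdd (shift c a) (shift c b)
  | ESub a b => ESub (shift c a) (shift c b)
  | EMul a b => EMul (shift c a) (shift c b)
  | ESum n body => ESum (shift c n) (shift (S c) body)
  | EIter n init step => EIter (shift c n) (shift c init) (shift (S c) step)
  | ELet a body => ELet (shift c a) (shift (S c) body)
  end.

Notation lift := (shift 0).

Definition insert_at (c x : nat) (env : nat -> nat) : nat -> nat :=
  fun i => if i <? c then env i else if i =? c then x else env (i - 1).

Lemma push_insert_at y c x env i :
  push y (insert_at c x env) i = insert_at (S c) x (push y env) i.
Proof.
  destruct i as [|i]; [reflexivity|]. unfold insert_at. simpl push.
  destruct (Nat.ltb_spec i c), (Nat.ltb_spec (S i) (S c)); try lia; auto.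
  destruct (Nat.eqb_spec i c), (Nat.eqb_spec (S i) (S c)); try lia; auto.
  destruct i; [lia|]. simpl. rewrite Nat.sub_0_r. reflexivity.
Qed.

Lemma den_shift e c x env : den (shift c e) (insert_at c x env) = den e env.
Proof.
  revert c env. induction e; intros c env; simpl; rewrite ?IHe1, ?IHe2; auto.
  - unfold insert_at. destruct (Nat.ltb_spec i c); cbn [den].
    + destruct (Nat.ltb_spec i c); [reflexivity | lia].
    + destruct (Nat.ltb_spec (S i) c); [lia|]. destruct (Nat.eqb_spec (S i) c); [lia|].
      f_equal. lia.
  - apply bsum_ext. intros j _. rewrite <- (IHe2 (S c) (push j env)).
    apply den_ext, push_insert_at.
  - apply iter_ext. intros j. rewrite <- (IHe3 (S c) (push j env)).
    apply den_ext, push_insert_at.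
  - rewrite <- (IHe2 (S c) (push _ env)). apply den_ext, push_insert_at.
Qed.

Lemma den_lift e x env : den (lift e) (push x env) = den e env.
Proof.
  rewrite <- (den_shift e 0 x env). apply den_ext.
  intros [|i]; unfold insert_at; simpl; rewrite ?Nat.sub_0_r; reflexivity.
Qed.

Lemma den_shift1 e a b env : den (shift 1 e) (push a (push b env)) = den e (push a env).
Proof.
  rewrite <- (den_shift e 1 b (push a env)). apply den_ext.
  intros [|[|i]]; unfold insert_at; simpl; rewrite ?Nat.sub_0_r; reflexivity.
Qed.

Lemma den_shift2 e a b c env :
  den (shift 2 e) (push a (push b (push c env))) = den e (push a (push b env)).
Proof.
  rewrite <- (den_shift e 2 c (push a (push b env))). apply den_ext.
  intros [|[|[|i]]]; unfold insert_at; simpl; rewrite ?Nat.sub_0_r; reflexivity.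
Qed.

Create HintDb den_db.
#[export] Hint Rewrite den_lift den_shift1 den_shift2 : den_db.

(* Unfolds [den], but rewrites each named combinator with its [den_db] equation (also
   under binders) instead of unfolding its definition. *)
Ltac den_simpl :=
  repeat progress (cbn [den push map]; try rewrite_strat (topdown (hints den_db))).

Definition epos a := ESub (EC 1) (ESub (EC 1) a).
Definition enot a := ESub (EC 1) a.
Definition eeq a b := enot (EAdd (ESub a b) (ESub b a)).
Definition ele a b := enot (ESub a b).
Definition elt a b := ele (EAdd a (EC 1)) b.

Lemma den_epos a env : den (epos a) env = Nat.b2n (0 <? den a env).
Proof. unfold epos. cbn [den]. destruct (Nat.ltb_spec 0 (den a env)); cbn [Nat.b2n]; lia. Qed.
Lemma den_enot a env : den (enot a) env = 1 - den a env.
Proof. reflexivity. Qed.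
Lemma den_eeq a b env : den (eeq a b) env = Nat.b2n (den a env =? den b env).
Proof.
  unfold eeq, enot. cbn [den].
  destruct (Nat.eqb_spec (den a env) (den b env)); cbn [Nat.b2n]; lia.
Qed.
Lemma den_ele a b env : den (ele a b) env = Nat.b2n (den a env <=? den b env).
Proof.
  unfold ele, enot. cbn [den].
  destruct (Nat.leb_spec (den a env) (den b env)); cbn [Nat.b2n]; lia.
Qed.
Lemma den_elt a b env : den (elt a b) env = Nat.b2n (den a env <? den b env).
Proof. unfold elt. rewrite den_ele. cbn [den]. rewrite Nat.add_1_r. reflexivity. Qed.

#[export] Hint Rewrite den_epos den_enot den_eeq den_ele den_elt : den_db.

(* The quotient is the unique [q <= x] with [q * d <= x < (q + 1) * d]; no such [q]
   exists for [d = 0], matching [x / 0 = 0]. *)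
Definition ediv x d :=
  ESum (EAdd x (EC 1)) (EMul (EV 0) (EMul (ele (EMul (EV 0) (lift d)) (lift x))
                                          (elt (lift x) (EMul (EAdd (EV 0) (EC 1)) (lift d))))).

Lemma den_ediv x d env : den (ediv x d) env = den x env / den d env.
Proof.
  unfold ediv. den_simpl. set (X := den x env). set (D := den d env).
  destruct (Nat.eq_dec D 0) as [HD|HD].
  - rewrite HD, Nat.div_0_r. apply bsum_zero. intros q _.
    rewrite !Nat.mul_0_r. reflexivity.
  - assert (Hq1 : D * (X / D) <= X) by (apply Nat.Div0.mul_div_le).
    assert (Hq2 : X < D * (X / D) + D).
    { pose proof (Nat.div_mod X D HD). pose proof (Nat.mod_upper_bound X D HD). lia. }
    rewrite (bsum_single _ _ (X / D)).
    + rewrite (proj2 (Nat.leb_le _ _)), (proj2 (Nat.ltb_lt _ _)) by nia. simpl. lia.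
    + pose proof (Nat.Div0.div_le_upper_bound X D X). nia.
    + intros q _ Hne.
      destruct (Nat.leb_spec (q * D) X), (Nat.ltb_spec X ((q + 1) * D)); simpl; try lia.
      exfalso. apply Hne.
      assert (q <= X / D) by (apply Nat.div_le_lower_bound; nia).
      assert (X / D < q + 1) by (apply Nat.Div0.div_lt_upper_bound; nia). lia.
Qed.

#[export] Hint Rewrite den_ediv : den_db.

Definition emod x d := ESub x (EMul d (ediv x d)).

Lemma den_emod x d env : den (emod x d) env = den x env mod den d env.
Proof.
  unfold emod. den_simpl. symmetry. apply Nat.Div0.mod_eq.
Qed.

#[export] Hint Rewrite den_emod : den_db.

Definition epow b e := EIter e (EC 1) (EMul (EV 0) (lift b)).

Lemma den_epow b e env : den (epow b e) env = den b env ^ den e env.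
Proof.
  unfold epow. den_simpl. induction (den e env) as [|n IH]; [reflexivity|].
  simpl. rewrite IH. lia.
Qed.

#[export] Hint Rewrite den_epow : den_db.

Definition edigit b w j := emod (ediv w (epow b j)) b.

Lemma den_edigit b w j env : den (edigit b w j) env = digit (den b env) (den w env) (den j env).
Proof. unfold edigit. den_simpl. reflexivity. Qed.

#[export] Hint Rewrite den_edigit : den_db.

Definition ebit w j := edigit (EC 2) w j.

Lemma den_ebit w j env : den (ebit w j) env = Nat.b2n (Nat.testbit (den w env) (den j env)).
Proof. unfold ebit. rewrite den_edigit, digit2_testbit. reflexivity. Qed.

#[export] Hint Rewrite den_ebit : den_db.

Definition enpair a b := EAdd (ediv (EMul (EAdd a b) (EAdd (EAdd a b) (EC 1))) (EC 2)) b.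

Lemma den_enpair a b env : den (enpair a b) env = npair (den a env) (den b env).
Proof. unfold enpair. den_simpl. reflexivity. Qed.

#[export] Hint Rewrite den_enpair : den_db.

Definition efst z :=
  ESum (EAdd z (EC 1)) (EMul (EV 0) (epos (ESum (EAdd (lift z) (EC 1))
    (eeq (enpair (EV 1) (EV 0)) (lift (lift z)))))).
Definition esnd z :=
  ESum (EAdd z (EC 1)) (EMul (EV 0) (epos (ESum (EAdd (lift z) (EC 1))
    (eeq (enpair (EV 0) (EV 1)) (lift (lift z)))))).

Lemma den_efst z env : den (efst z) env = nfst (den z env).
Proof. unfold efst. den_simpl. reflexivity. Qed.
Lemma den_esnd z env : den (esnd z) env = nsnd (den z env).
Proof. unfold esnd. den_simpl. reflexivity. Qed.

#[export] Hint Rewrite den_efst den_esnd : den_db.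

(** * Course-of-values recursion *)

(* [history g n] stores the values [cov_rec g (n - 1), ..., cov_rec g 0] as nested pairs,
   and [g m h] computes the value at [m] from the history [h] of the values below [m]. *)
Fixpoint history (g : nat -> nat -> nat) (n : nat) : nat :=
  match n with 0 => 0 | S m => npair (g m (history g m)) (history g m) end.

Definition cov_rec (g : nat -> nat -> nat) (m : nat) : nat := g m (history g m).

Definition look (h n i : nat) : nat := nfst (Nat.iter (n - 1 - i) nsnd h).

Lemma history_ext g1 g2 n : (forall m h, g1 m h = g2 m h) -> history g1 n = history g2 n.
Proof. intros H. induction n as [|n IH]; simpl; [reflexivity|]. rewrite IH, H. reflexivity. Qed.

Lemma cov_rec_ext g1 g2 n : (forall m h, g1 m h = g2 m h) -> cov_rec g1 n = cov_rec g2 n.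
Proof. intros H. unfold cov_rec. rewrite (history_ext g1 g2) by exact H. apply H. Qed.

#[export] Instance cov_rec_proper :
  Proper (pointwise_relation nat (pointwise_relation nat eq) ==> eq ==> eq) cov_rec.
Proof. intros g1 g2 H n m ->. apply cov_rec_ext, H. Qed.

Lemma look_history g n i : i < n -> look (history g n) n i = cov_rec g i.
Proof.
  intros H. unfold look.
  remember (n - 1 - i) as d. replace n with (S i + d) by lia. clear Heqd H.
  assert (Hd : Nat.iter d nsnd (history g (S i + d)) = history g (S i)).
  { induction d as [|d IH]; [rewrite Nat.add_0_r; reflexivity|].
    rewrite Nat.add_succ_r, Nat.iter_succ_r. cbn [history]. rewrite nsnd_npair. exact IH. }
  rewrite Hd. cbn [history]. apply nfst_npair.
Qed.

Definition elook h n i := efst (EIter (ESub (ESub n (EC 1)) i) h (esnd (EV 0))).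

Lemma den_elook h n i env : den (elook h n i) env = look (den h env) (den n env) (den i env).
Proof. unfold elook. den_simpl. reflexivity. Qed.

#[export] Hint Rewrite den_elook : den_db.

(* Iterates [(m, history g m) |-> (m + 1, history g (m + 1))]. *)
Definition ecov arg g :=
  efst (esnd (EIter (EAdd arg (EC 1)) (enpair (EC 0) (EC 0))
    (ELet (efst (EV 0)) (ELet (esnd (EV 1))
      (enpair (EAdd (EV 1) (EC 1)) (enpair (shift 2 g) (EV 0))))))).

Lemma den_ecov arg g env :
  den (ecov arg g) env = cov_rec (fun n h => den g (push h (push n env))) (den arg env).
Proof.
  unfold ecov. den_simpl. set (g' := fun n h => den g (push h (push n env))).
  assert (Hiter : forall m, Nat.iter m (fun s => npair (nfst s + 1)
      (npair (den g (push (nsnd s) (push (nfst s) env))) (nsnd s))) (npair 0 0)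
      = npair m (history g' m)).
  { induction m as [|m IH]; [reflexivity|].
    simpl Nat.iter. rewrite IH, nfst_npair, nsnd_npair, Nat.add_1_r. reflexivity. }
  rewrite Hiter, Nat.add_1_r, nsnd_npair. cbn [history]. apply nfst_npair.
Qed.

#[export] Hint Rewrite den_ecov : den_db.

Fixpoint ecase_from (i : nat) (t : exp) (es : list exp) : exp :=
  match es with
  | [] => EC 0
  | e :: es => EAdd (EMul (eeq t (EC i)) e) (ecase_from (S i) t es)
  end.

Definition ecase := ecase_from 0.

Lemma den_ecase_from i t es env :
  den (ecase_from i t es) env =
  if den t env <? i then 0 else nth (den t env - i) (map (fun e => den e env) es) 0.
Proof.
  revert i. induction es as [|e es IH]; intros i; cbn [ecase_from den map].
  - destruct (den t env <? i), (den t env - i); reflexivity.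
  - rewrite den_eeq, IH. cbn [den].
    destruct (Nat.eqb_spec (den t env) i) as [->|Hne].
    + rewrite Nat.ltb_irrefl, (proj2 (Nat.ltb_lt i (S i))), Nat.sub_diag by lia.
      cbn [Nat.b2n nth]. lia.
    + destruct (Nat.ltb_spec (den t env) i), (Nat.ltb_spec (den t env) (S i)); try lia;
        cbn [Nat.b2n]; [reflexivity|].
      replace (den t env - i) with (S (den t env - S i)) by lia. cbn [nth]. lia.
Qed.

Lemma den_ecase t es env :
  den (ecase t es) env = nth (den t env) (map (fun e => den e env) es) 0.
Proof. unfold ecase. rewrite den_ecase_from, Nat.sub_0_r. reflexivity. Qed.

#[export] Hint Rewrite den_ecase : den_db.

Definition sum_step (p : nat -> nat) (n h : nat) : nat :=
  Nat.b2n (0 <? n) * (p (nfst (n - 1)) + look h n (nsnd (n - 1))).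

Definition sum_coded_list (p : nat -> nat) (z : nat) : nat := cov_rec (sum_step p) z.

#[export] Instance sum_coded_list_proper :
  Proper (pointwise_relation nat eq ==> eq ==> eq) sum_coded_list.
Proof.
  intros p q H z z' ->. apply cov_rec_ext. intros m h. unfold sum_step. rewrite H. reflexivity.
Qed.

Lemma sum_coded_list_enc p l :
  sum_coded_list p (enc_list l) = list_sum (map (fun a => p (enc_form a)) l).
Proof.
  unfold sum_coded_list. induction l as [|a l IH]; [reflexivity|]. cbn [enc_list map list_sum].
  unfold cov_rec at 1, sum_step at 1. rewrite Nat.sub_succ, Nat.sub_0_r, nfst_npair, nsnd_npair.
  rewrite look_history, IH by (pose proof (npair_ge_r (enc_form a) (enc_list l)); lia).
  simpl. lia.
Qed.

Definition esum_coded_list l body :=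
  ecov l (EMul (epos (EV 1)) (EAdd (ELet (efst (ESub (EV 1) (EC 1))) (shift 1 (shift 1 body)))
                                   (elook (EV 0) (EV 1) (esnd (ESub (EV 1) (EC 1)))))).

Lemma den_esum_coded_list l body env :
  den (esum_coded_list l body) env = sum_coded_list (fun x => den body (push x env)) (den l env).
Proof. unfold esum_coded_list. den_simpl. reflexivity. Qed.

#[export] Hint Rewrite den_esum_coded_list : den_db.

(** * Formulas and truth tables *)

Lemma subst_subst s s' a : subst s' (subst s a) = subst (fun i => subst s' (s i)) a.
Proof. induction a; simpl; congruence. Qed.

Lemma subst_Var a : subst Var a = a.
Proof. induction a; simpl; congruence. Qed.

Lemma eval_refl_subst v s a : eval_refl v (subst s a) = eval_refl (fun i => eval_refl v (s i)) a.
Proof. induction a; simpl; congruence. Qed.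

Fixpoint var_bound (a : form) : nat :=
  match a with
  | Var n => S n
  | Neg a | Dia a | Box a => var_bound a
  | And a b | Or a b => Nat.max (var_bound a) (var_bound b)
  end.

Lemma var_bound_subst s a k :
  (forall i, i < var_bound a -> var_bound (s i) <= k) -> 1 <= k -> var_bound (subst s a) <= k.
Proof.
  induction a; simpl; intros H Hk; try apply Nat.max_lub; auto with arith;
    try (apply IHa1 || apply IHa2); auto; intros; apply H; lia.
Qed.

Lemma var_bound_le_enc a : var_bound a <= S (enc_form a).
Proof.
  induction a; cbn [enc_form var_bound].
  - pose proof (npair_ge_r 0 n). lia.
  - pose proof (npair_gt_r 1 (enc_form a)). lia.
  - pose proof (lt_npair_pair_l 2 (enc_form a1) (enc_form a2)).
    pose proof (lt_npair_pair_r 2 (enc_form a1) (enc_form a2)). lia.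
  - pose proof (lt_npair_pair_l 3 (enc_form a1) (enc_form a2)).
    pose proof (lt_npair_pair_r 3 (enc_form a1) (enc_form a2)). lia.
  - pose proof (npair_gt_r 4 (enc_form a)). lia.
  - pose proof (npair_gt_r 5 (enc_form a)). lia.
Qed.

Lemma eval_refl_agree v v' a :
  (forall i, i < var_bound a -> v i = v' i) -> eval_refl v a = eval_refl v' a.
Proof.
  induction a; cbn [eval_refl var_bound]; intros H; auto with arith;
    rewrite ?IHa, ?IHa1, ?IHa2; auto; intros; apply H; lia.
Qed.

Lemma ML_in G g : In g G -> ML G g.
Proof. intros H. rewrite <- (subst_Var g). apply ML_app; [exact H | intros; constructor]. Qed.

Lemma ML_subst G b s : ML G b -> (forall x, ML G (s x)) -> ML G (subst s b).
Proof.
  intros Hb Hs. induction Hb as [n|g s' Hg _ IH]; [apply Hs|].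
  rewrite subst_subst. apply ML_app; [exact Hg | exact IH].
Qed.

(* [nfst n] is the tag of the outermost connective of the formula coded by [n], [nsnd n]
   the code of its argument(s); [h] holds the values at all smaller codes. *)
Definition eval_step (W n h : nat) : nat :=
  let x := nsnd n in
  nth (nfst n) [Nat.b2n (Nat.testbit W x); 1 - look h n x; look h n (nfst x) * look h n (nsnd x);
                Nat.b2n (0 <? look h n (nfst x) + look h n (nsnd x)); look h n x; look h n x] 0.

Definition code_eval (W : nat) : nat -> nat := cov_rec (eval_step W).

Definition propositional_step (n h : nat) : nat :=
  let x := nsnd n in
  nth (nfst n) [1; look h n x; look h n (nfst x) * look h n (nsnd x);
                look h n (nfst x) * look h n (nsnd x); 0; 0] 0.

Definition code_propositional : nat -> nat := cov_rec propositional_step.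

Ltac unfold_cov_rec_at_code step :=
  unfold cov_rec at 1; cbn [enc_form]; unfold step at 1;
  repeat (rewrite nfst_npair || rewrite nsnd_npair); cbn [nth];
  rewrite ?look_history by (apply npair_gt_r || apply lt_npair_pair_l || apply lt_npair_pair_r;
                            auto with arith).

Lemma code_eval_enc W a : code_eval W (enc_form a) = Nat.b2n (eval_refl (Nat.testbit W) a).
Proof.
  unfold code_eval. induction a; unfold_cov_rec_at_code eval_step; cbn [eval_refl];
    rewrite ?IHa, ?IHa1, ?IHa2.
  - reflexivity.
  - destruct (eval_refl (Nat.testbit W) a); reflexivity.
  - destruct (eval_refl (Nat.testbit W) a1), (eval_refl (Nat.testbit W) a2); reflexivity.
  - destruct (eval_refl (Nat.testbit W) a1), (eval_refl (Nat.testbit W) a2); reflexivity.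
  - reflexivity.
  - reflexivity.
Qed.

Lemma code_propositional_enc a : code_propositional (enc_form a) = Nat.b2n (propositional a).
Proof.
  unfold code_propositional.
  induction a; unfold_cov_rec_at_code propositional_step; cbn [propositional];
    rewrite ?IHa, ?IHa1, ?IHa2; try reflexivity.
  all: destruct (propositional a1), (propositional a2); reflexivity.
Qed.

Definition eeval w f :=
  let L i := elook (EV 0) (EV 1) i in
  let x := esnd (EV 1) in
  ecov f (ecase (efst (EV 1))
    [ebit (lift (lift w)) x; enot (L x); EMul (L (efst x)) (L (esnd x));
     epos (EAdd (L (efst x)) (L (esnd x))); L x; L x]).

Lemma den_eeval w f env : den (eeval w f) env = code_eval (den w env) (den f env).
Proof. unfold eeval. den_simpl. reflexivity. Qed.

#[export] Hint Rewrite den_eeval : den_db.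

Definition epropositional f :=
  let L i := elook (EV 0) (EV 1) i in
  let x := esnd (EV 1) in
  ecov f (ecase (efst (EV 1))
    [EC 1; L x; EMul (L (efst x)) (L (esnd x)); EMul (L (efst x)) (L (esnd x)); EC 0; EC 0]).

Lemma den_epropositional f env :
  den (epropositional f) env = code_propositional (den f env).
Proof. unfold epropositional. den_simpl. reflexivity. Qed.

#[export] Hint Rewrite den_epropositional : den_db.

Definition table (M : nat) (a : form) : nat :=
  bsum M (fun j => 2 ^ j * Nat.b2n (eval_refl (Nat.testbit j) a)).

Definition code_table (M f : nat) : nat := bsum M (fun j => 2 ^ j * code_eval j f).

Definition etable M f := ESum M (EMul (epow (EC 2) (EV 0)) (eeval (EV 0) (lift f))).

Lemma den_etable M f env : den (etable M f) env = code_table (den M env) (den f env).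
Proof. unfold etable. den_simpl. reflexivity. Qed.

#[export] Hint Rewrite den_etable : den_db.

Lemma code_table_enc M a : code_table M (enc_form a) = table M a.
Proof. apply bsum_ext. intros j _. rewrite code_eval_enc. reflexivity. Qed.

Lemma table_lt M a : table M a < 2 ^ M.
Proof. apply bsum_bits_lt. Qed.

Lemma testbit_table M a j : j < M -> Nat.testbit (table M a) j = eval_refl (Nat.testbit j) a.
Proof. apply testbit_bsum. Qed.

Lemma table_eq M a b :
  table M a = table M b <->
  forall j, j < M -> eval_refl (Nat.testbit j) a = eval_refl (Nat.testbit j) b.
Proof.
  split.
  - intros E j Hj. rewrite <- (testbit_table M a j Hj), <- (testbit_table M b j Hj), E.
    reflexivity.
  - intros E. apply bsum_ext. intros j Hj. rewrite E by exact Hj. reflexivity.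
Qed.

Definition valuation_code (k : nat) (v : nat -> bool) : nat :=
  bsum k (fun i => 2 ^ i * Nat.b2n (v i)).

Lemma testbit_valuation_code k v i : i < k -> Nat.testbit (valuation_code k v) i = v i.
Proof. apply testbit_bsum. Qed.

Lemma table_eq_iff_equivalent k a b :
  var_bound a <= k -> var_bound b <= k ->
  table (2 ^ k) a = table (2 ^ k) b <-> forall v, eval_refl v a = eval_refl v b.
Proof.
  intros Ha Hb. rewrite table_eq. split; [|auto].
  intros E v. pose proof (E (valuation_code k v) (bsum_bits_lt k v)) as Ev.
  rewrite (eval_refl_agree v (Nat.testbit (valuation_code k v)) a),
          (eval_refl_agree v (Nat.testbit (valuation_code k v)) b) by
    (intros i Hi; symmetry; apply testbit_valuation_code; lia).
  exact Ev.
Qed.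

(** * Saturating a set of tables *)

Section InflationaryIteration.

Variables (N : nat) (f : nat -> nat).

Hypothesis f_congr :
  forall P P', (forall T, T < N -> Nat.testbit P T = Nat.testbit P' T) -> f P = f P'.
Hypothesis f_inflationary :
  forall P T, T < N -> Nat.testbit P T = true -> Nat.testbit (f P) T = true.

Definition bit_count (P : nat) : nat := bsum N (fun T => Nat.b2n (Nat.testbit P T)).

Lemma bit_count_le P : bit_count P <= N.
Proof.
  unfold bit_count. clear. induction N as [|n IH]; simpl; [lia|].
  destruct (Nat.testbit P n); simpl; lia.
Qed.

Lemma bit_le_step P T : T < N -> Nat.b2n (Nat.testbit P T) <= Nat.b2n (Nat.testbit (f P) T).
Proof.
  intros HT. destruct (Nat.testbit P T) eqn:E; [rewrite f_inflationary by assumption|]; simpl; lia.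
Qed.

Lemma bit_count_step P : bit_count P <= bit_count (f P).
Proof. apply bsum_le, bit_le_step. Qed.

(* Along the iteration the count of bits below [N] grows until it stalls, which it must
   do within [N] steps; a stall means the bits, hence all further iterates, are fixed. *)
Lemma iter_stalls x :
  exists i, i <= N /\ bit_count (Nat.iter (S i) f x) = bit_count (Nat.iter i f x).
Proof.
  assert (Hgrow : forall n, n <= bit_count (Nat.iter n f x) \/
            exists i, i < n /\ bit_count (Nat.iter (S i) f x) = bit_count (Nat.iter i f x)).
  { induction n as [|n [IH|[i [Hi E]]]]; [left; lia| |right; exists i; split; [lia|exact E]].
    pose proof (bit_count_step (Nat.iter n f x)).
    destruct (Nat.eq_dec (bit_count (Nat.iter (S n) f x)) (bit_count (Nat.iter n f x))) as [E|E].
    - right. exists n. split; [lia|exact E].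
    - left. simpl in *. lia. }
  destruct (Hgrow (S N)) as [H|[i [Hi E]]].
  - pose proof (bit_count_le (Nat.iter (S N) f x)). lia.
  - exists i. split; [lia|exact E].
Qed.

Lemma iter_fixpoint x : f (Nat.iter (S N) f x) = Nat.iter (S N) f x.
Proof.
  destruct (iter_stalls x) as [i [Hi E]].
  assert (Hfix : f (Nat.iter (S i) f x) = Nat.iter (S i) f x).
  { change (f (Nat.iter (S i) f x) = f (Nat.iter i f x)). apply f_congr. intros T HT.
    symmetry. apply Nat.b2n_inj.
    apply (bsum_le_eq N _ _ (bit_le_step (Nat.iter i f x))); [symmetry; exact E | exact HT]. }
  assert (Hstay : forall d, Nat.iter (d + S i) f x = Nat.iter (S i) f x).
  { induction d as [|d IH]; [reflexivity|]. simpl. rewrite IH. exact Hfix. }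
  replace (S N) with (N - i + S i) by lia. rewrite Hstay. exact Hfix.
Qed.

End InflationaryIteration.

(** * Deciding clone membership *)

Definition compose_table (M N m p a : nat) : nat :=
  bsum M (fun j => 2 ^ j *
    code_eval (bsum m (fun i => 2 ^ i * Nat.b2n (Nat.testbit (digit N a i) j))) p).

(* [S p] bounds the variables of the formula coded by [p] ([var_bound_le_enc]), so [a]
   ranges over all assignments of tables to them. *)
Definition composable (M N p P T : nat) : nat :=
  Nat.b2n (0 <? bsum (N ^ S p) (fun a =>
    Nat.b2n (bsum (S p) (fun i => Nat.b2n (Nat.testbit P (digit N a i))) =? S p)
    * Nat.b2n (T =? compose_table M N (S p) p a))).

Definition generated (M N Q X P T : nat) : nat :=
  Nat.b2n (0 <? sum_coded_list (fun p => code_propositional p * composable M N p P T) Q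
              + sum_coded_list (fun p => composable M N p P T) X).

Definition clone_step (M N Q X P : nat) : nat :=
  bsum N (fun T => 2 ^ T *
    Nat.b2n (0 <? Nat.b2n (Nat.testbit P T) + generated M N Q X P T)).

Definition projection_tables (k M N : nat) : nat :=
  bsum N (fun T => 2 ^ T *
    Nat.b2n (0 <? bsum k (fun i => Nat.b2n (T =? code_table M (npair 0 i))))).

(* With [k := S f] bounding the variables of the formula coded by [f], tables have
   [M := 2 ^ k] rows and are numbers below [N := 2 ^ M]; a set of tables is the number
   whose bits below [N] are its members. *)
Definition clone_member (Q X f : nat) : nat :=
  let M := 2 ^ S f in
  let N := 2 ^ M in
  Nat.b2n (Nat.testbit (Nat.iter (S N) (clone_step M N Q X) (projection_tables (S f) M N))
                       (code_table M f)).

Definition criterion_code (X z : nat) : nat :=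
  1 - sum_coded_list (fun f => code_propositional f * (1 - clone_member (nsnd z) X f)) (nfst z).

Definition ecompose_table M N m p a :=
  ESum M (EMul (epow (EC 2) (EV 0))
    (eeval (ESum (lift m) (EMul (epow (EC 2) (EV 0))
                               (ebit (edigit (lift (lift N)) (lift (lift a)) (EV 0)) (EV 1))))
           (lift p))).

Lemma den_ecompose_table M N m p a env :
  den (ecompose_table M N m p a) env =
  compose_table (den M env) (den N env) (den m env) (den p env) (den a env).
Proof. unfold ecompose_table. den_simpl. reflexivity. Qed.

#[export] Hint Rewrite den_ecompose_table : den_db.

Definition ecomposable M N p P T :=
  epos (ESum (epow N (EAdd p (EC 1)))
    (EMul (eeq (ESum (EAdd (lift p) (EC 1))
                     (ebit (lift (lift P)) (edigit (lift (lift N)) (EV 1) (EV 0))))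
               (EAdd (lift p) (EC 1)))
          (eeq (lift T)
               (ecompose_table (lift M) (lift N) (EAdd (lift p) (EC 1)) (lift p) (EV 0))))).

Lemma den_ecomposable M N p P T env :
  den (ecomposable M N p P T) env =
  composable (den M env) (den N env) (den p env) (den P env) (den T env).
Proof. unfold ecomposable. den_simpl. rewrite !Nat.add_1_r. reflexivity. Qed.

#[export] Hint Rewrite den_ecomposable : den_db.

Definition egenerated M N Q X P T :=
  epos (EAdd (esum_coded_list Q (EMul (epropositional (EV 0))
                            (ecomposable (lift M) (lift N) (EV 0) (lift P) (lift T))))
             (esum_coded_list X (ecomposable (lift M) (lift N) (EV 0) (lift P) (lift T)))).

Lemma den_egenerated M N Q X P T env :
  den (egenerated M N Q X P T) env =
  generated (den M env) (den N env) (den Q env) (den X env) (den P env) (den T env).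
Proof. unfold egenerated. den_simpl. reflexivity. Qed.

#[export] Hint Rewrite den_egenerated : den_db.

Definition eclone_step M N Q X P :=
  ESum N (EMul (epow (EC 2) (EV 0))
    (epos (EAdd (ebit (lift P) (EV 0))
                (egenerated (lift M) (lift N) (lift Q) (lift X) (lift P) (EV 0))))).

Lemma den_eclone_step M N Q X P env :
  den (eclone_step M N Q X P) env =
  clone_step (den M env) (den N env) (den Q env) (den X env) (den P env).
Proof. unfold eclone_step. den_simpl. reflexivity. Qed.

#[export] Hint Rewrite den_eclone_step : den_db.

Definition eprojection_tables k M N :=
  ESum N (EMul (epow (EC 2) (EV 0))
    (epos (ESum (lift k) (eeq (EV 1) (etable (lift (lift M)) (enpair (EC 0) (EV 0))))))).

Lemma den_eprojection_tables k M N env :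
  den (eprojection_tables k M N) env = projection_tables (den k env) (den M env) (den N env).
Proof. unfold eprojection_tables. den_simpl. reflexivity. Qed.

#[export] Hint Rewrite den_eprojection_tables : den_db.

Definition eclone_member Q X f :=
  ELet (epow (EC 2) (EAdd f (EC 1))) (ELet (epow (EC 2) (EV 0))
    (ebit (EIter (EAdd (EV 0) (EC 1))
                 (eprojection_tables (EAdd (lift (lift f)) (EC 1)) (EV 1) (EV 0))
                 (eclone_step (EV 2) (EV 1) (lift (lift (lift Q))) (lift (lift (lift X))) (EV 0)))
          (etable (EV 1) (lift (lift f))))).

Lemma den_eclone_member Q X f env :
  den (eclone_member Q X f) env = clone_member (den Q env) (den X env) (den f env).
Proof. unfold eclone_member. den_simpl. rewrite !Nat.add_1_r. reflexivity. Qed.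

#[export] Hint Rewrite den_eclone_member : den_db.

Definition ecriterion X :=
  ESub (EC 1) (esum_coded_list (efst (EV 0))
    (EMul (epropositional (EV 0)) (ESub (EC 1) (eclone_member (esnd (EV 1)) (EC X) (EV 0))))).

Lemma den_ecriterion X env : den (ecriterion X) env = criterion_code X (env 0).
Proof. unfold ecriterion. den_simpl. reflexivity. Qed.

Lemma compose_table_subst M N m g a s :
  var_bound g <= m -> (forall i, i < var_bound g -> digit N a i = table M (s i)) ->
  compose_table M N m (enc_form g) a = table M (subst s g).
Proof.
  intros Hm Hs. apply bsum_ext. intros j Hj. rewrite code_eval_enc, eval_refl_subst.
  f_equal. f_equal. apply eval_refl_agree. intros i Hi.
  rewrite (testbit_bsum m (fun i => Nat.testbit (digit N a i) j)) by lia.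
  rewrite Hs, testbit_table by assumption. reflexivity.
Qed.

Lemma composable_spec M N p P T :
  0 < composable M N p P T <->
  exists a, a < N ^ S p /\ (forall i, i < S p -> Nat.testbit P (digit N a i) = true) /\
            T = compose_table M N (S p) p a.
Proof.
  unfold composable. rewrite b2n_ltb_pos, bsum_pos.
  split; intros [a [Ha H]]; exists a; split; auto;
    rewrite <- (bsum_bits_full (S p) (fun i => Nat.testbit P (digit N a i))) in *;
    destruct (Nat.eqb_spec (bsum (S p) (fun i => Nat.b2n (Nat.testbit P (digit N a i)))) (S p)),
             (Nat.eqb_spec T (compose_table M N (S p) p a)); simpl in *; intuition lia.
Qed.

Definition generators (E Psi : list form) : list form := filter propositional Psi ++ E.

Lemma generated_spec M N E Psi P T :
  0 < generated M N (enc_list Psi) (enc_list E) P T <->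
  exists g, In g (generators E Psi) /\ 0 < composable M N (enc_form g) P T.
Proof.
  assert (Hadd : forall x y, 0 < x + y <-> 0 < x \/ 0 < y) by lia.
  unfold generated, generators. rewrite b2n_ltb_pos, !sum_coded_list_enc, Hadd,
    !list_sum_map_pos. setoid_rewrite in_app_iff. setoid_rewrite filter_In.
  setoid_rewrite code_propositional_enc. split.
  - intros [[g [Hg Hp]]|[g [Hg Hp]]].
    + exists g. destruct (propositional g); simpl in Hp; [|lia]. split; [auto | lia].
    + exists g. auto.
  - intros [g [[[Hg Hprop]|Hg] Hp]]; [left|right]; exists g;
      [rewrite Hprop; simpl; split; [auto|lia] | auto].
Qed.

Lemma testbit_clone_step M N Q X P T :
  T < N ->
  Nat.testbit (clone_step M N Q X P) T = Nat.testbit P T || (0 <? generated M N Q X P T).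
Proof.
  intros HT. unfold clone_step.
  rewrite (testbit_bsum N (fun T => 0 <? Nat.b2n (Nat.testbit P T) + generated M N Q X P T))
    by exact HT.
  destruct (Nat.testbit P T), (Nat.ltb_spec 0 (generated M N Q X P T)); simpl;
    apply Nat.ltb_lt || apply Nat.ltb_ge; lia.
Qed.

Lemma testbit_projection_tables k M N T :
  T < N ->
  Nat.testbit (projection_tables k M N) T = true <-> exists i, i < k /\ T = table M (Var i).
Proof.
  intros HT. unfold projection_tables.
  rewrite (testbit_bsum N (fun T => 0 <? bsum k (fun i => Nat.b2n (T =? code_table M (npair 0 i)))))
    by exact HT.
  rewrite Nat.ltb_lt, bsum_pos.
  setoid_rewrite (code_table_enc M (Var _) : code_table M (npair 0 _) = _).
  split; intros [i [Hi H]]; exists i; split; auto;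
    destruct (Nat.eqb_spec T (table M (Var i))); simpl in *; lia.
Qed.

Section CloneStepBits.

Variables (M N Q X : nat).
Hypothesis N_pos : 0 < N.

Lemma composable_congr p P P' T :
  (forall T, T < N -> Nat.testbit P T = Nat.testbit P' T) ->
  composable M N p P T = composable M N p P' T.
Proof.
  intros H. unfold composable. do 2 f_equal. apply bsum_ext. intros a _.
  do 3 f_equal. apply bsum_ext. intros i _. rewrite H by (apply digit_lt, N_pos). reflexivity.
Qed.

Lemma clone_step_congr P P' :
  (forall T, T < N -> Nat.testbit P T = Nat.testbit P' T) ->
  clone_step M N Q X P = clone_step M N Q X P'.
Proof.
  intros H. apply bsum_ext. intros T HT. unfold generated.
  setoid_rewrite (composable_congr _ P P' T H). rewrite H by exact HT. reflexivity.
Qed.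

Lemma clone_step_inflationary P T :
  T < N -> Nat.testbit P T = true -> Nat.testbit (clone_step M N Q X P) T = true.
Proof. intros HT HP. rewrite testbit_clone_step, HP by exact HT. reflexivity. Qed.

End CloneStepBits.

Definition restrict_vars (k : nat) : nat -> form := fun n => if n <? k then Var n else Var 0.

Lemma table_subst_restrict_vars M k t phi :
  var_bound phi <= k -> (forall v, eval_refl v t = eval_refl v phi) ->
  table M (subst (restrict_vars k) t) = table M phi.
Proof.
  intros Hk Heq. apply table_eq. intros j _. rewrite eval_refl_subst, Heq.
  apply eval_refl_agree. intros i Hi. unfold restrict_vars.
  rewrite (proj2 (Nat.ltb_lt i k)) by lia. reflexivity.
Qed.

Section CloneComputation.

Variables (E Psi : list form) (k : nat).
Hypothesis k_pos : 1 <= k.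

Let G := generators E Psi.
Let M := 2 ^ k.
Let N := 2 ^ M.
Let step := clone_step M N (enc_list Psi) (enc_list E).
Let P0 := projection_tables k M N.

Lemma tables_pos : 0 < N.
Proof. apply Nat.neq_0_lt_0, Nat.pow_nonzero. lia. Qed.

Lemma clone_iter_sound i T :
  T < N -> Nat.testbit (Nat.iter i step P0) T = true ->
  exists t, ML G t /\ var_bound t <= k /\ table M t = T.
Proof.
  revert T. induction i as [|i IH]; intros T HT HP.
  - apply testbit_projection_tables in HP as [n [Hn ->]]; [|exact HT].
    exists (Var n). split; [constructor | split; [simpl; lia | reflexivity]].
  - rewrite Nat.iter_succ in HP. unfold step in HP at 1.
    rewrite testbit_clone_step in HP by exact HT.
    apply orb_true_iff in HP as [HP|HP]; [exact (IH T HT HP)|].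
    apply Nat.ltb_lt, generated_spec in HP as [g [Hg HC]].
    apply composable_spec in HC as [a [_ [Ha ->]]].
    destruct (choice (fun j t => ML G t /\
               (j < S (enc_form g) -> var_bound t <= k /\ table M t = digit N a j))) as [s Hs].
    { intros j. destruct (Nat.lt_ge_cases j (S (enc_form g))) as [Hj|Hj].
      - destruct (IH _ (digit_lt _ a j tables_pos) (Ha j Hj)) as [t Ht]. exists t. tauto.
      - exists (Var 0). split; [apply ML_var | lia]. }
    pose proof (var_bound_le_enc g) as Hgb.
    exists (subst s g). split; [|split].
    + apply ML_app; [exact Hg | apply Hs].
    + apply var_bound_subst; [|exact k_pos]. intros j Hj. apply Hs. lia.
    + symmetry. apply compose_table_subst; [exact Hgb|]. intros j Hj. symmetry. apply Hs. lia.
Qed.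

Let Pfix := Nat.iter (S N) step P0.

Lemma clone_fixpoint : step Pfix = Pfix.
Proof.
  apply iter_fixpoint.
  - apply clone_step_congr, tables_pos.
  - apply clone_step_inflationary.
Qed.

Lemma clone_fixpoint_complete t :
  ML G t -> Nat.testbit Pfix (table M (subst (restrict_vars k) t)) = true.
Proof.
  induction 1 as [n|g s Hg _ IH].
  - assert (HP0 : Nat.testbit P0 (table M (restrict_vars k n)) = true).
    { apply testbit_projection_tables; [apply table_lt|]. unfold restrict_vars.
      destruct (Nat.ltb_spec n k); [exists n | exists 0]; split; auto; lia. }
    unfold Pfix. generalize (S N) as i. induction i as [|i IH]; [exact HP0|].
    rewrite Nat.iter_succ. apply clone_step_inflationary; [apply table_lt | exact IH].
  - rewrite subst_subst, <- clone_fixpoint. unfold step at 1.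
    rewrite testbit_clone_step by apply table_lt.
    apply orb_true_iff. right. apply Nat.ltb_lt, generated_spec. exists g. split; [exact Hg|].
    set (h := fun i => table M (subst (restrict_vars k) (s i))).
    assert (Hh : forall i, i < S (enc_form g) -> h i < N) by (intros; apply table_lt).
    apply composable_spec.
    exists (bsum (S (enc_form g)) (fun i => N ^ i * h i)). split; [|split].
    + apply bsum_digits_lt, Hh.
    + intros i Hi. rewrite digit_bsum by assumption. apply IH.
    + symmetry. apply compose_table_subst; [apply var_bound_le_enc|].
      intros i Hi. apply digit_bsum; [exact Hh|]. pose proof (var_bound_le_enc g). lia.
Qed.

End CloneComputation.

Definition in_clone (G : list form) (phi : form) : Prop :=
  exists t, ML G t /\ forall v, eval_refl v t = eval_refl v phi.

Lemma clone_member_spec E Psi phi :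
  clone_member (enc_list Psi) (enc_list E) (enc_form phi) = 1 <-> in_clone (generators E Psi) phi.
Proof.
  pose proof (var_bound_le_enc phi) as Hphi.
  assert (Hk : 1 <= S (enc_form phi)) by lia.
  unfold clone_member. rewrite code_table_enc, b2n_eq_1. split.
  - intros H. destruct (clone_iter_sound E Psi _ Hk _ _ (table_lt _ phi) H) as [t [Ht [Htk Htab]]].
    exists t. split; [exact Ht|]. exact (proj1 (table_eq_iff_equivalent _ t phi Htk Hphi) Htab).
  - intros [t [Ht Heq]]. rewrite <- (table_subst_restrict_vars _ _ t phi Hphi Heq).
    exact (clone_fixpoint_complete E Psi _ Hk t Ht).
Qed.

Definition clone_criterion (G Phi : list form) : Prop :=
  forall phi, In phi Phi -> propositional phi = true -> in_clone G phi.

Lemma criterion_code_spec E Phi Psi :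
  let r := criterion_code (enc_list E) (npair (enc_list Phi) (enc_list Psi)) in
  (clone_criterion (generators E Psi) Phi <-> r = 1) /\ r <= 1.
Proof.
  cbv zeta. unfold criterion_code. rewrite nfst_npair, nsnd_npair, sum_coded_list_enc.
  set (defect := fun a => code_propositional (enc_form a) *
                          (1 - clone_member (enc_list Psi) (enc_list E) (enc_form a))).
  split; [|lia].
  assert (Hsum : 1 - list_sum (map defect Phi) = 1 <-> ~ 0 < list_sum (map defect Phi)) by lia.
  rewrite Hsum, list_sum_map_pos. unfold defect. split.
  - intros Hcr [phi [Hin Hpos]]. rewrite code_propositional_enc in Hpos.
    destruct (propositional phi) eqn:Hp; cbn [Nat.b2n] in Hpos; [|lia].
    rewrite (proj2 (clone_member_spec E Psi phi) (Hcr phi Hin Hp)) in Hpos. lia.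
  - intros Hno phi Hin Hp. apply clone_member_spec.
    destruct (Nat.eq_dec (clone_member (enc_list Psi) (enc_list E) (enc_form phi)) 1) as [E1|E1];
      [exact E1|].
    exfalso. apply Hno. exists phi. split; [exact Hin|].
    rewrite code_propositional_enc, Hp. unfold clone_member in *.
    destruct (Nat.testbit _ _); simpl in *; lia.
Qed.

Lemma decidable_on_by_exp (dom : list form -> Prop) P e :
  (forall Phi Psi env, dom Phi -> dom Psi -> env 0 = npair (enc_list Phi) (enc_list Psi) ->
     (P Phi Psi <-> den e env = 1) /\ den e env <= 1) ->
  decidable_on dom P.
Proof.
  intros He. destruct (exp_computable e 1) as [c Hc]. exists c. intros Phi Psi HPhi HPsi.
  set (z := npair (enc_list Phi) (enc_list Psi)).
  specialize (Hc [z] eq_refl). destruct (He Phi Psi (fun i => nth i [z] 0) HPhi HPsi eq_refl)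
    as [HP Hle].
  destruct (Nat.eq_dec (den e (fun i => nth i [z] 0)) 1) as [E1|E1].
  - left. split; [apply HP, E1 | rewrite <- E1; exact Hc].
  - right. split; [rewrite HP; exact E1|].
    replace 0 with (den e (fun i => nth i [z] 0)) by lia. exact Hc.
Qed.

Theorem clone_criterion_decidable dom E :
  decidable_on dom (fun Phi Psi => clone_criterion (generators E Psi) Phi).
Proof.
  apply (decidable_on_by_exp dom _ (ecriterion (enc_list E))).
  intros Phi Psi env _ _ Henv. rewrite den_ecriterion, Henv. apply criterion_code_spec.
Qed.

Lemma decidable_on_iff dom (P Q : list form -> list form -> Prop) :
  (forall Phi Psi, dom Phi -> dom Psi -> (P Phi Psi <-> Q Phi Psi)) ->
  decidable_on dom Q -> decidable_on dom P.
Proof.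
  intros HPQ [c Hc]. exists c. intros Phi Psi HPhi HPsi.
  rewrite (HPQ Phi Psi HPhi HPsi). apply Hc; assumption.
Qed.

(** * Normal modal logics *)

Definition Top : form := Or (Var 0) (Neg (Var 0)).

Fixpoint dian (n : nat) (a : form) : form :=
  match n with 0 => a | S k => Dia (dian k a) end.

Ltac prove_tautology :=
  let v := fresh "v" in let d := fresh "d" in let b := fresh "b" in
  intros v d b; simpl;
  repeat match goal with
         | |- context [peval v d b ?x] => destruct (peval v d b x)
         | |- context [d ?x] => destruct (d x)
         | |- context [b ?x] => destruct (b x)
         | |- context [v ?x] => destruct (v x)
         end; reflexivity.

Section NormalLogic.

Variable L : logic.
Hypothesis HL : normal_logic L.

Lemma L_taut a : tautology a -> L a.
Proof. apply (nl_taut L HL). Qed.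

Lemma L_mp a b : L a -> L (Imp a b) -> L b.
Proof. apply (nl_mp L HL). Qed.

Lemma L_mp2 a b c : L a -> L b -> tautology (Imp a (Imp b c)) -> L c.
Proof.
  intros Ha Hb Ht. apply (L_mp b); [exact Hb|]. apply (L_mp a); [exact Ha | apply L_taut, Ht].
Qed.

Lemma L_iff_refl a : L (Iff a a).
Proof. apply L_taut. prove_tautology. Qed.

Lemma L_iff_sym a b : L (Iff a b) -> L (Iff b a).
Proof. intros H. apply (L_mp _ _ H), L_taut. prove_tautology. Qed.

Lemma L_iff_trans a b c : L (Iff a b) -> L (Iff b c) -> L (Iff a c).
Proof. intros H1 H2. apply (L_mp2 _ _ _ H1 H2). prove_tautology. Qed.

Lemma L_iff_Neg a b : L (Iff a b) -> L (Iff (Neg a) (Neg b)).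
Proof. intros H. apply (L_mp _ _ H), L_taut. prove_tautology. Qed.

Lemma L_iff_And a b c d : L (Iff a b) -> L (Iff c d) -> L (Iff (And a c) (And b d)).
Proof. intros H1 H2. apply (L_mp2 _ _ _ H1 H2). prove_tautology. Qed.

Lemma L_iff_Or a b c d : L (Iff a b) -> L (Iff c d) -> L (Iff (Or a c) (Or b d)).
Proof. intros H1 H2. apply (L_mp2 _ _ _ H1 H2). prove_tautology. Qed.

Lemma L_Box_mono a b : L (Imp a b) -> L (Imp (Box a) (Box b)).
Proof.
  intros H. apply (L_mp (Box (Imp a b))); [exact (nl_nec L HL _ H)|].
  exact (nl_us L HL (fun i => match i with 0 => a | _ => b end) _ (nl_K L HL)).
Qed.

Lemma L_iff_Box a b : L (Iff a b) -> L (Iff (Box a) (Box b)).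
Proof.
  intros H.
  assert (H1 : L (Imp a b)) by (apply (L_mp _ _ H), L_taut; prove_tautology).
  assert (H2 : L (Imp b a)) by (apply (L_mp _ _ H), L_taut; prove_tautology).
  apply (L_mp2 _ _ _ (L_Box_mono _ _ H1) (L_Box_mono _ _ H2)). prove_tautology.
Qed.

Lemma L_dual a : L (Iff (Dia a) (Neg (Box (Neg a)))).
Proof. exact (nl_us L HL (fun _ => a) _ (nl_dual L HL)). Qed.

Lemma L_iff_Dia a b : L (Iff a b) -> L (Iff (Dia a) (Dia b)).
Proof.
  intros H. apply (L_iff_trans _ _ _ (L_dual a)).
  apply (fun H' => L_iff_trans _ _ _ H' (L_iff_sym _ _ (L_dual b))).
  apply L_iff_Neg, L_iff_Box, L_iff_Neg, H.
Qed.

Lemma L_iff_subst s a b : L (Iff a b) -> L (Iff (subst s a) (subst s b)).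
Proof. apply (nl_us L HL s (Iff a b)). Qed.

Lemma L_iff_subst_pointwise s s' a :
  (forall x, L (Iff (s x) (s' x))) -> L (Iff (subst s a) (subst s' a)).
Proof.
  intros Hs. induction a; simpl.
  - apply Hs.
  - apply L_iff_Neg; assumption.
  - apply L_iff_And; assumption.
  - apply L_iff_Or; assumption.
  - apply L_iff_Dia; assumption.
  - apply L_iff_Box; assumption.
Qed.

Lemma L_dian_iff n a : L (Iff (dian n a) (Neg (boxn n (Neg a)))).
Proof.
  induction n as [|n IH]; simpl; [apply L_taut; prove_tautology|].
  apply (L_iff_trans _ _ _ (L_iff_Dia _ _ IH)), (L_iff_trans _ _ _ (L_dual _)).
  apply L_iff_Neg, L_iff_Box, L_taut. prove_tautology.
Qed.

Lemma L_boxn_mono n a b : L (Imp a b) -> L (Imp (boxn n a) (boxn n b)).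
Proof. intros H. induction n as [|n IH]; simpl; [exact H | apply L_Box_mono, IH]. Qed.

Lemma L_boxn_of_boxn_Bot n a : L (boxn n Bot) -> L (boxn n a).
Proof. intros H. apply (L_mp _ _ H), L_boxn_mono, L_taut. prove_tautology. Qed.

Lemma L_Bot_iff_dian n a : L (boxn n Bot) -> L (Iff Bot (dian n a)).
Proof.
  intros H. apply (L_mp2 _ _ _ (L_dian_iff n a) (L_boxn_of_boxn_Bot n (Neg a) H)).
  prove_tautology.
Qed.

Lemma L_Top_iff_boxn n a : L (boxn n Bot) -> L (Iff Top (boxn n a)).
Proof.
  intros H. apply (L_mp _ _ (L_boxn_of_boxn_Bot n a H)), L_taut. prove_tautology.
Qed.

End NormalLogic.

(** * Expressivity over one-world frames *)

Lemma preceq_of_generators L G Psi :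
  normal_logic L -> (forall g, In g G -> exists b, ML Psi b /\ L (Iff g b)) -> preceq L G Psi.
Proof.
  intros HL HG a Ha. induction Ha as [n|g s Hg _ IH].
  - exists (Var n). split; [constructor | apply L_iff_refl, HL].
  - destruct (choice _ IH) as [f Hf]. destruct (HG g Hg) as [b [Hb Hgb]].
    exists (subst f b). split.
    + apply ML_subst; [exact Hb | apply Hf].
    + apply (L_iff_trans L HL _ (subst s b)); [apply L_iff_subst, Hgb; exact HL|].
      apply L_iff_subst_pointwise; [exact HL | apply Hf].
Qed.

Lemma ML_modal Psi (op : form -> form) y a :
  In (op (Var y)) Psi -> (forall s, subst s (op (Var y)) = op (s y)) -> ML Psi a -> ML Psi (op a).
Proof.
  intros Hin Hop Ha. rewrite <- (Hop (fun _ => a)). apply ML_app; [exact Hin | intros; exact Ha].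
Qed.

Lemma ML_dian Psi y n : In (Dia (Var y)) Psi -> ML Psi (dian n (Var 0)).
Proof.
  intros Hin. induction n as [|n IH]; [constructor|].
  apply (ML_modal Psi Dia y); [exact Hin | reflexivity | exact IH].
Qed.

Lemma ML_boxn Psi y n : In (Box (Var y)) Psi -> ML Psi (boxn n (Var 0)).
Proof.
  intros Hin. induction n as [|n IH]; [constructor|].
  apply (ML_modal Psi Box y); [exact Hin | reflexivity | exact IH].
Qed.

Lemma propositional_peval v d b a :
  propositional a = true -> peval v d b a = eval_refl v a.
Proof.
  induction a; simpl; intros Hp; try discriminate; try reflexivity;
    try apply andb_prop in Hp as [H1 H2]; rewrite ?IHa, ?IHa1, ?IHa2; auto.
Qed.

Lemma propositional_eval_irr v a : propositional a = true -> eval_irr v a = eval_refl v a.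
Proof.
  induction a; simpl; intros Hp; try discriminate; try reflexivity;
    try apply andb_prop in Hp as [H1 H2]; rewrite ?IHa, ?IHa1, ?IHa2; auto.
Qed.

Lemma ML_propositional G t :
  (forall g, In g G -> propositional g = true) -> ML G t -> propositional t = true.
Proof.
  intros HG Ht. induction Ht as [n|g s Hg _ IH]; [reflexivity|].
  specialize (HG g Hg). clear Hg. induction g; simpl in *; try discriminate; auto;
    apply andb_prop in HG as [H1 H2]; rewrite IHg1, IHg2; auto.
Qed.

Lemma L_iff_of_equivalent L a b :
  normal_logic L -> propositional a = true -> propositional b = true ->
  (forall v, eval_refl v a = eval_refl v b) -> L (Iff a b).
Proof.
  intros HL Ha Hb Hab. apply L_taut; [exact HL|]. intros v d bx. simpl.
  rewrite !propositional_peval, Hab by assumption. destruct (eval_refl v b); reflexivity.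
Qed.

Lemma preceq_of_clone_criterion L mD mB E Phi Psi :
  normal_logic L -> M_simple mD mB Phi -> M_simple mD mB Psi ->
  (forall e, In e E -> propositional e = true /\ exists b, ML Psi b /\ L (Iff e b)) ->
  clone_criterion (generators E Psi) Phi -> preceq L Phi Psi.
Proof.
  intros HL [HPhi _] [_ [HD HB]] HE Hcr.
  assert (Hgens : preceq L (generators E Psi) Psi).
  { apply preceq_of_generators; [exact HL|]. intros g Hg. apply in_app_or in Hg as [Hg|Hg].
    - exists g. split; [apply ML_in, (proj1 (filter_In _ _ _) Hg) | apply L_iff_refl, HL].
    - apply HE, Hg. }
  apply preceq_of_generators; [exact HL|]. intros phi Hphi.
  destruct (HPhi phi Hphi) as [Hp|[[HmD [x ->]]|[HmB [x ->]]]].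
  - destruct (Hcr phi Hphi Hp) as [t [Ht Heq]].
    destruct (Hgens t Ht) as [b [Hb Htb]]. exists b. split; [exact Hb|].
    apply (L_iff_trans L HL _ t); [|exact Htb].
    apply L_iff_of_equivalent; [exact HL | exact Hp | | intros v; symmetry; apply Heq].
    apply (ML_propositional (generators E Psi)); [|exact Ht].
    intros g Hg. apply in_app_or in Hg as [Hg|Hg]; [apply (filter_In propositional g Psi), Hg|].
    apply HE, Hg.
  - destruct (HD HmD) as [y Hy]. exists (Dia (Var x)). split; [|apply L_iff_refl, HL].
    apply (ML_modal Psi Dia y); [exact Hy | reflexivity | constructor].
  - destruct (HB HmB) as [y Hy]. exists (Box (Var x)). split; [|apply L_iff_refl, HL].
    apply (ML_modal Psi Box y); [exact Hy | reflexivity | constructor].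
Qed.

Lemma clone_criterion_of_preceq L (ev : (nat -> bool) -> form -> bool) G Phi Psi :
  (forall a, L a -> forall v, ev v a = true) ->
  (forall v a, propositional a = true -> ev v a = eval_refl v a) ->
  (forall v a b, ev v (Iff a b) = true -> ev v a = ev v b) ->
  (forall b, ML Psi b -> exists t, ML G t /\ forall v, ev v b = eval_refl v t) ->
  preceq L Phi Psi -> clone_criterion G Phi.
Proof.
  intros Hsound Hprop Hiff Hcollapse Hpre phi Hin Hp.
  destruct (Hpre phi (ML_in _ _ Hin)) as [b [Hb HLb]].
  destruct (Hcollapse b Hb) as [t [Ht Hbt]]. exists t. split; [exact Ht|]. intros v.
  rewrite <- Hbt, <- (Hprop v phi Hp). symmetry. apply Hiff, Hsound, HLb.
Qed.

Lemma ML_collapse (ev : (nat -> bool) -> form -> bool) G Psi :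
  (forall v n, ev v (Var n) = v n) ->
  (forall v s a, ev v (subst s a) = ev (fun i => ev v (s i)) a) ->
  (forall g, In g Psi -> exists t, ML G t /\ forall w, ev w g = eval_refl w t) ->
  forall b, ML Psi b -> exists t, ML G t /\ forall v, ev v b = eval_refl v t.
Proof.
  intros Hvar Hsubst Hgen b Hb. induction Hb as [n|g s Hg _ IH].
  - exists (Var n). split; [apply ML_var | intros v; apply Hvar].
  - destruct (choice _ IH) as [f Hf]. destruct (Hgen g Hg) as [t [Ht Hgt]].
    exists (subst f t). split; [apply ML_subst; [exact Ht | apply Hf]|].
    intros v. rewrite Hsubst, Hgt, eval_refl_subst.
    apply eval_refl_agree. intros i _. apply Hf.
Qed.

Lemma eval_irr_subst v s a : eval_irr v (subst s a) = eval_irr (fun i => eval_irr v (s i)) a.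
Proof. induction a; simpl; congruence. Qed.

Lemma ML_generators_propositional E Psi g :
  In g Psi -> propositional g = true -> ML (generators E Psi) g.
Proof. intros Hg Hp. apply ML_in, in_or_app. left. apply filter_In. auto. Qed.

Theorem preceq_iff_typeA L mD mB Phi Psi :
  normal_logic L -> typeA L -> M_simple mD mB Phi -> M_simple mD mB Psi ->
  preceq L Phi Psi <-> clone_criterion (generators [] Psi) Phi.
Proof.
  intros HL HA HPhi HPsi. split.
  - apply (clone_criterion_of_preceq L eval_refl); [exact HA | reflexivity | |].
    + intros v a b. simpl. destruct (eval_refl v a), (eval_refl v b); simpl; congruence.
    + apply ML_collapse; [reflexivity | apply eval_refl_subst|].
      intros g Hg. destruct (proj1 HPsi g Hg) as [Hp|[[_ [y ->]]|[_ [y ->]]]].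
      * exists g. split; [apply ML_generators_propositional; assumption | reflexivity].
      * exists (Var y). split; [constructor | reflexivity].
      * exists (Var y). split; [constructor | reflexivity].
  - apply (preceq_of_clone_criterion L mD mB); [assumption .. | intros e []].
Qed.

Definition modal_constants (mD mB : bool) : list form :=
  (if mD then [Bot] else []) ++ (if mB then [Top] else []).

Theorem preceq_iff_typeB L mD mB Phi Psi :
  normal_logic L -> typeB L -> M_simple mD mB Phi -> M_simple mD mB Psi ->
  preceq L Phi Psi <-> clone_criterion (generators (modal_constants mD mB) Psi) Phi.
Proof.
  intros HL [Hirr [n [_ Hn]]] HPhi HPsi.
  assert (HBot : mD = true -> ML (generators (modal_constants mD mB) Psi) Bot).
  { intros ->. apply ML_in, in_or_app. right. left. reflexivity. }
  assert (HTop : mB = true -> ML (generators (modal_constants mD mB) Psi) Top).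
  { intros ->. apply ML_in, in_or_app. right. apply in_or_app. right. left. reflexivity. }
  split.
  - apply (clone_criterion_of_preceq L eval_irr); [exact Hirr | apply propositional_eval_irr | |].
    + intros v a b. simpl. destruct (eval_irr v a), (eval_irr v b); simpl; congruence.
    + apply ML_collapse; [reflexivity | apply eval_irr_subst|].
      intros g Hg. destruct (proj1 HPsi g Hg) as [Hp|[[HmD [y ->]]|[HmB [y ->]]]].
      * exists g. split; [apply ML_generators_propositional; assumption|].
        intros w. apply propositional_eval_irr, Hp.
      * exists Bot. split; [apply HBot, HmD | intros w; simpl; destruct (w 0); reflexivity].
      * exists Top. split; [apply HTop, HmB | intros w; simpl; destruct (w 0); reflexivity].
  - apply (preceq_of_clone_criterion L mD mB); [assumption ..|].
    destruct HPsi as [_ [HD HB]]. intros e He. apply in_app_or in He as [He|He].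
    + destruct mD; [|contradiction]. destruct He as [<-|[]]. split; [reflexivity|].
      destruct (HD eq_refl) as [y Hy]. exists (dian n (Var 0)).
      split; [apply (ML_dian Psi y n Hy) | apply L_Bot_iff_dian; assumption].
    + destruct mB; [|contradiction]. destruct He as [<-|[]]. split; [reflexivity|].
      destruct (HB eq_refl) as [y Hy]. exists (boxn n (Var 0)).
      split; [apply (ML_boxn Psi y n Hy) | apply L_Top_iff_boxn; assumption].
Qed.

Theorem corollary4p17 (L : logic) (mD mB : bool) :
  normal_logic L -> typeA L \/ typeB L ->
  decidable_on (M_simple mD mB) (preceq L).
Proof.
  intros HL [HA|HB].
  - apply (decidable_on_iff _ _ (fun Phi Psi => clone_criterion (generators [] Psi) Phi)).
    + intros Phi Psi HPhi HPsi. exact (preceq_iff_typeA L mD mB Phi Psi HL HA HPhi HPsi).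
    + apply clone_criterion_decidable.
  - apply (decidable_on_iff _ _
      (fun Phi Psi => clone_criterion (generators (modal_constants mD mB) Psi) Phi)).
    + intros Phi Psi HPhi HPsi. exact (preceq_iff_typeB L mD mB Phi Psi HL HB HPhi HPsi).
    + apply clone_criterion_decidable.
Qed.
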